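(* Let $n \ge 2$, $G = Q_{4n}$, $k\ge0$, $n_1,m_1,\dots,n_k,m_k$ nonzero integers, and let $\lambda_R \in \mathbb{Z}C_{2n}$ be as defined below. Let $q: \mathbb{Z}C_{2n} \to \mathbb{Z}C_n$ be induced by the quotient $C_{2n} \to C_n$, and let $\bar{\cdot}$ be the involution of $\mathbb{Z}C_{2n}$ with $x^i \mapsto x^{-i}$. Then: (i) the equation $\alpha(xy - 1) + \beta\lambda_R = 1$ has a solution $\alpha, \beta \in \mathbb{Z}G$ if and only if $\delta q(\lambda_R) + \gamma q(\bar\lambda_R) = 1$ has a solution $\delta, \gamma \in \mathbb{Z}C_n$. More specifically, if $\widetilde\delta, \widetilde\gamma \in \mathbb{Z}C_{2n}$ lift such $\delta, \gamma$, then there exists $\varepsilon \in \mathbb{Z}C_{2n}$ with $\widetilde\delta\lambda_R + \widetilde\gamma\bar\lambda_R + \varepsilon(x^n - 1) = 1$, and one may take $\alpha = \varepsilon - \widetilde\gamma\bar\lambda_R + \varepsilon xy$, $\beta = \widetilde\delta + \widetilde\gamma xy$. (ii) If $\delta\lambda_R + \gamma\bar\lambda_R = 1$ for some $\delta, \gamma \in \mathbb{Z}C_{2n}$, then $\alpha = -\gamma\bar\lambda_R$, $\beta = \delta + \gamma xy$ solve $\alpha(xy-1) + \beta\lambda_R = 1$.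
   Context: $G = Q_{4n} = \langle x, y \mid x^n y^{-2}, xyxy^{-1} \rangle$ and $C_{2n} = \langle x \rangle \le G$ (so $\mathbb{Z}C_{2n} \subseteq \mathbb{Z}G$). With $n_{k+1} = 1-\sum_{i=1}^k n_i$, $m_{k+1} = 1-\sum_{i=1}^k m_i$, set $\lambda_R = \sum_{i=1}^{k+1} x^{\sum_{j=1}^{i-1}(n_j - m_j)} \sigma(n_i)$, where $\sigma(r) = 1 + x + \dots + x^{r-1}$ for $r>0$, $\sigma(0) = 0$, $\sigma(r) = -x^r(1 + \dots + x^{|r|-1})$ for $r<0$. *)

From HB Require Import structures.
From mathcomp Require Import all_boot all_order all_algebra all_fingroup.
Set Implicit Arguments. Unset Strict Implicit. Unset Printing Implicit Defensive.
Import GRing.Theory Num.Theory.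

(* Integral group ring Z[T] of a finite group T, modelled as {ffun T -> int}.
   Addition/subtraction/sums are the pointwise ones of {ffun T -> int};
   multiplication is convolution [gr_mul]; the unit is [gr_one].
   WARNING: never use the pointwise ring product / 1 of {ffun _ -> int}. *)
Section GroupRing.
Variable T : finGroupType.

Definition gr_mul (f g : {ffun T -> int}) : {ffun T -> int} :=
  [ffun z => \sum_(u : T) f u * g (u^-1 * z)%g]%R.

Definition gr_of (u : T) : {ffun T -> int} := [ffun z => Posz ((z == u) : nat)].

Definition gr_one : {ffun T -> int} := gr_of 1%g.

(* f lies in Z[A] (support contained in A) *)
Definition supp_in (A : {set T}) (f : {ffun T -> int}) : Prop :=
  forall u, u \notin A -> f u = 0%R.

(* the involution u |-> u^-1 (on Z C_{2n} this is x^i |-> x^-i) *)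
Definition gr_bar (f : {ffun T -> int}) : {ffun T -> int} := [ffun u => f (u^-1)%g].

Definition gpow (u : T) (z : int) : T :=
  match z with Posz m => (u ^+ m)%g | Negz m => ((u ^+ m.+1)^-1)%g end.

Definition gr_sigma (x : T) (r : int) : {ffun T -> int} :=
  if (0 <= r)%R then (\sum_(i < `|r|%N) gr_of (x ^+ i)%g)%R
  else (- gr_mul (gr_of (gpow x r)) (\sum_(i < `|r|%N) gr_of (x ^+ i)%g))%R.

(* lambda_R for n_1..n_k = ns, m_1..m_k = ms (n_{k+1}, m_{k+1} appended) *)
Definition ext_seq (s : seq int) : seq int := rcons s (1 - \sum_(a <- s) a)%R.

Definition lambdaR (x : T) (ns ms : seq int) : {ffun T -> int} :=
  (\sum_(i < (size ns).+1)
     gr_mul (gr_of (gpow x (\sum_(j < i) (nth 0 (ext_seq ns) j - nth 0 (ext_seq ms) j))))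
            (gr_sigma x (nth 0 (ext_seq ns) i)))%R.

End GroupRing.

Definition gr_quo (T : finGroupType) (x : T) (H : {group T}) (f : {ffun T -> int})
  : {ffun coset_of H -> int} :=
  [ffun c => \sum_(u in <[x]>%g | coset H u == c) f u]%R.

(* Put t = x y.  Then G is the disjoint union of C_2n and C_2n t, t^2 = x^n,
   and t inverts C_2n, so t f = bar(f) t for f in Z C_2n.  Writing
   alpha = a1 + a2 t and beta = b1 + b2 t with a_i, b_i in Z C_2n and comparing
   the two components of alpha (t - 1) + beta lambda = 1 shows that this equation
   is solvable iff d lambda + g bar(lambda) + eps (x^n - 1) = 1 is solvable in
   Z C_2n, and any such (d, g, eps) gives the solution
   alpha = eps - g bar(lambda) + eps t, beta = d + g t.  As x^n has order 2, the
   kernel of q : Z C_2n -> Z C_n is the ideal generated by x^n - 1, which turns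
   the last equation into delta q(lambda) + gamma q(bar(lambda)) = 1. *)

From HB Require Import structures.
From mathcomp Require Import all_boot all_order all_algebra all_fingroup.
From mathcomp Require Import cyclic zify ring.
Import GRing.Theory.

Set Implicit Arguments.
Unset Strict Implicit.
Unset Printing Implicit Defensive.

Ltac ffun_ring := apply/ffunP => ?; rewrite !ffunE; ring.

Section GroupRing.
Variable T : finGroupType.
Implicit Types (f g h : {ffun T -> int}) (a b : T).
Local Open Scope ring_scope.

Lemma gr_mul_ofl a f : gr_mul (gr_of a) f = [ffun z => f (a^-1 * z)%g].
Proof.
apply/ffunP=> z; rewrite !ffunE (bigD1 a) //= big1 ?addr0.
  by rewrite ffunE eqxx mul1r.
by move=> u /negbTE ua; rewrite ffunE ua mul0r.
Qed.

Lemma gr_mul_ofr a f : gr_mul f (gr_of a) = [ffun z => f (z * a^-1)%g].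
Proof.
apply/ffunP=> z; rewrite !ffunE (bigD1 (z * a^-1)%g) //= big1 ?addr0.
  by rewrite ffunE invMg invgK mulgKV eqxx mulr1.
move=> u ua; rewrite ffunE; case: eqP => [e|]; last by rewrite mulr0.
by case/eqP: ua; rewrite -e invMg invgK mulKVg.
Qed.

Lemma gr_mul_of a b : gr_mul (gr_of a) (gr_of b) = gr_of (a * b)%g.
Proof.
apply/ffunP=> z; rewrite gr_mul_ofl !ffunE; congr (Posz (nat_of_bool _)).
by apply/eqP/eqP=> [<-|->]; rewrite ?mulKVg ?mulKg.
Qed.

Lemma gr_mul1r f : gr_mul f (gr_one T) = f.
Proof. by apply/ffunP=> z; rewrite gr_mul_ofr ffunE invg1 mulg1. Qed.

Lemma gr_mulDl f g h : gr_mul (f + g) h = gr_mul f h + gr_mul g h.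
Proof.
apply/ffunP=> z; rewrite !ffunE -big_split.
by apply: eq_bigr => u _; rewrite !ffunE mulrDl.
Qed.

Lemma gr_mulDr f g h : gr_mul f (g + h) = gr_mul f g + gr_mul f h.
Proof.
apply/ffunP=> z; rewrite !ffunE -big_split.
by apply: eq_bigr => u _; rewrite !ffunE mulrDr.
Qed.

Lemma gr_mulNl f g : gr_mul (- f) g = - gr_mul f g.
Proof.
by apply/ffunP=> z; rewrite !ffunE -sumrN; apply: eq_bigr => u _; rewrite !ffunE mulNr.
Qed.

Lemma gr_mulNr f g : gr_mul f (- g) = - gr_mul f g.
Proof.
by apply/ffunP=> z; rewrite !ffunE -sumrN; apply: eq_bigr => u _; rewrite !ffunE mulrN.
Qed.

Lemma gr_mulBr f g h : gr_mul f (g - h) = gr_mul f g - gr_mul f h.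
Proof. by rewrite gr_mulDr gr_mulNr. Qed.

Lemma gr_mul0l f : gr_mul 0 f = 0.
Proof. by apply/ffunP=> z; rewrite !ffunE big1 // => u _; rewrite ffunE mul0r. Qed.

Lemma gr_mul0r f : gr_mul f 0 = 0.
Proof. by apply/ffunP=> z; rewrite !ffunE big1 // => u _; rewrite ffunE mulr0. Qed.

Lemma gr_mulA f g h : gr_mul f (gr_mul g h) = gr_mul (gr_mul f g) h.
Proof.
apply/ffunP=> z; rewrite !ffunE.
under [RHS]eq_bigr do rewrite ffunE mulr_suml.
rewrite exchange_big /=; apply: eq_bigr => v _.
rewrite ffunE mulr_sumr [RHS](reindex_inj (mulgI v)) /=.
by apply: eq_bigr => w _; rewrite mulKg mulrA invMg mulgA.
Qed.

Variable A : {group T}.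

Lemma supp_inD f g : supp_in A f -> supp_in A g -> supp_in A (f + g).
Proof. by move=> sf sg u uA; rewrite ffunE sf // sg // addr0. Qed.

Lemma supp_inN f : supp_in A f -> supp_in A (- f).
Proof. by move=> sf u uA; rewrite ffunE sf // oppr0. Qed.

Lemma supp_inB f g : supp_in A f -> supp_in A g -> supp_in A (f - g).
Proof. by move=> sf sg; apply: supp_inD => //; apply: supp_inN. Qed.

Lemma supp_in_of a : a \in A -> supp_in A (gr_of a).
Proof. by move=> aA u uA; rewrite ffunE; case: eqP => // e; rewrite e aA in uA. Qed.

Lemma supp_in_one : supp_in A (gr_one T).
Proof. exact/supp_in_of/group1. Qed.

Lemma supp_in_mul f g : supp_in A f -> supp_in A g -> supp_in A (gr_mul f g).
Proof.
move=> sf sg z zA; rewrite ffunE big1 // => u _.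
have [uA|uA] := boolP (u \in A); last by rewrite sf ?mul0r.
by rewrite sg ?mulr0 // groupMl ?groupV.
Qed.

Lemma supp_in_bar f : supp_in A f -> supp_in A (gr_bar f).
Proof. by move=> sf u uA; rewrite ffunE sf // groupV. Qed.

Lemma supp_in_sum (I : Type) (r : seq I) (P : pred I) (F : I -> {ffun T -> int}) :
  (forall i, supp_in A (F i)) -> supp_in A (\sum_(i <- r | P i) F i).
Proof.
move=> sF; elim/big_rec: _ => [u _|i f _ sf]; [by rewrite ffunE | exact: supp_inD].
Qed.

End GroupRing.

Lemma supp_in_lambdaR (T : finGroupType) (x : T) ns ms :
  supp_in <[x]>%g (lambdaR x ns ms).
Proof.
have gpow_in z : gpow x z \in <[x]>%g by case: z => m /=; rewrite ?groupV mem_cycle.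
have sigma_in r : supp_in <[x]>%g (\sum_(i < r) gr_of (x ^+ i)%g)%R.
  by apply: supp_in_sum => i; apply/supp_in_of/mem_cycle.
apply: supp_in_sum => i; apply: supp_in_mul; first exact/supp_in_of/gpow_in.
rewrite /gr_sigma; case: ifP => _ //.
by apply/supp_inN/supp_in_mul => //; apply/supp_in_of/gpow_in.
Qed.

Section Quotient.
Variables (T : finGroupType) (x : T) (H : {group T}).
Hypothesis sHX : (H \subset <[x]>)%g.
Local Notation X := <[x]>%g.
Local Notation q := (gr_quo x H).
Implicit Types (f g : {ffun T -> int}).
Local Open Scope ring_scope.

Lemma cycle_subnorm : (X \subset 'N(H))%g.
Proof. exact/cents_norm/(subset_trans (cycle_abelian x))/centS. Qed.

Lemma gr_quoD f g : q (f + g) = q f + q g.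
Proof. by apply/ffunP=> c; rewrite !ffunE -big_split; apply: eq_bigr => u _; rewrite ffunE. Qed.

Lemma gr_quoN f : q (- f) = - q f.
Proof. by apply/ffunP=> c; rewrite !ffunE -sumrN; apply: eq_bigr => u _; rewrite ffunE. Qed.

Lemma gr_quoB f g : q (f - g) = q f - q g.
Proof. by rewrite gr_quoD gr_quoN. Qed.

Lemma gr_quo_of u : u \in X -> q (gr_of u) = gr_of (coset H u).
Proof.
move=> uX; apply/ffunP=> c; rewrite !ffunE.
have [->|ne] := eqVneq c (coset H u).
  rewrite (bigD1 u) /=; last by rewrite uX eqxx.
  rewrite ffunE eqxx big1 ?addr0 // => v /andP[_ /negbTE vu].
  by rewrite ffunE vu.
rewrite big1 // => v /andP[_ /eqP e]; rewrite ffunE; case: eqP => // vu.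
by case/eqP: ne; rewrite -e vu.
Qed.

Lemma gr_quo_one : q (gr_one T) = gr_one _.
Proof. by rewrite /gr_one gr_quo_of ?group1 // morph1. Qed.

Lemma supp_in_gr_quo f : supp_in (X / H)%g (q f).
Proof.
move=> c cX; rewrite ffunE big1 // => u /andP[uX /eqP e].
by rewrite -e mem_quotient in cX.
Qed.

Lemma gr_quoM f g : supp_in X f -> supp_in X g -> q (gr_mul f g) = gr_mul (q f) (q g).
Proof.
move=> sf sg; apply/ffunP=> c; rewrite !ffunE.
have -> : \sum_(z in X | coset H z == c) gr_mul f g z =
          \sum_(z in X | coset H z == c) \sum_(u in X) f u * g (u^-1 * z)%g.
  apply: eq_bigr => z _; rewrite ffunE [LHS](bigID (mem X)) /=.
  by rewrite [X in _ + X]big1 ?addr0 // => u uX; rewrite sf ?mul0r.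
rewrite exchange_big /=.
have -> : \sum_d q f d * q g (d^-1 * c)%g =
   \sum_d \sum_(u in X | coset H u == d)
      f u * \sum_(w in X | coset H w == ((coset H u)^-1 * c)%g) g w.
  apply: eq_bigr => d _; rewrite ffunE mulr_suml.
  by apply: eq_bigr => u /andP[uX /eqP <-]; rewrite ffunE.
rewrite -(partition_big (coset H) predT) //=.
apply: eq_bigr => u uX; rewrite mulr_sumr (reindex_inj (mulgI u)) /=.
apply: eq_big => [w|w _]; last by rewrite mulKg.
have nHX := subsetP cycle_subnorm.
have [wX|wX] := boolP (w \in X); last by rewrite (groupMl _ uX) (negbTE wX).
rewrite groupMl // wX /= morphM ?nHX //.
apply/eqP/eqP => [e|e]; first by rewrite -e mulKg.
by change (coset H u * coset H w = c)%g; rewrite e mulKVg.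
Qed.

Lemma gr_quo_lift (d : {ffun coset_of H -> int}) :
  supp_in (X / H)%g d -> exists2 f, supp_in X f & q f = d.
Proof.
move=> sd.
exists [ffun u => if (u \in X) && (u == repr (coset H u)) then d (coset H u) else 0].
  by move=> u uX; rewrite ffunE (negbTE uX).
apply/ffunP=> c; have [cX|cX] := boolP (c \in (X / H)%g); last first.
  by rewrite sd // (supp_in_gr_quo _ cX).
have rX : repr c \in X.
  have nHX : (H <| X)%g by rewrite /normal sHX cycle_subnorm.
  rewrite -(quotientGK nHX) mem_morphpre ?repr_coset_norm //= coset_reprK //.
rewrite ffunE (bigD1 (repr c)) /=; last by rewrite rX coset_reprK eqxx.
rewrite ffunE rX coset_reprK eqxx /= big1 ?addr0 // => u /andP[/andP[uX /eqP e] nu].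
by rewrite ffunE e (negbTE nu) andbF.
Qed.

End Quotient.

Section QuotientByInvolution.
Variables (T : finGroupType) (x h : T).
Hypotheses (hX : h \in <[x]>%g) (ord_h : #[h]%g = 2%N).
Local Notation X := <[x]>%g.
Local Notation H := <[h]>%G.
Local Notation q := (gr_quo x H).
Implicit Types (f g : {ffun T -> int}).
Local Open Scope ring_scope.

Let sHX : (H \subset X)%g. Proof. by rewrite cycle_subG. Qed.

Lemma involution_inv : (h^-1 = h)%g.
Proof. by apply/eqP; rewrite eq_invg_mul -expg2 -ord_h expg_order. Qed.

Lemma mulg_involution_neq u : (u * h != u)%g.
Proof. by rewrite -{2}(mulg1 u) (inj_eq (mulgI u)) -order_eq1 ord_h. Qed.

Lemma mem_rcoset_involution u v : u \in X -> v \in (H :* u)%g ->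
  v = u \/ v = (u * h)%g.
Proof.
rewrite mem_rcoset => uX /cyclePmin[i]; rewrite ord_h.
case: i => [|[|//]] _; rewrite ?expg0 ?expg1 => e; [left|right].
  by rewrite -(mulgKV u v) e mul1g.
by rewrite -(mulgKV u v) e; apply/(centsP (cycle_abelian x)).
Qed.

Lemma coset_involutionP u v : u \in X -> v \in X ->
  (coset H v == coset H u) = (v == u) || (v == u * h)%g.
Proof.
move=> uX vX; have nHX := subsetP (cycle_subnorm sHX).
apply/eqP/orP => [|[] /eqP -> //]; last by rewrite coset_kerr ?cycle_id.
move/(rcoset_kercosetP (nHX v vX) (nHX u uX)).
by case/mem_rcoset_involution => // ->; [left|right].
Qed.

Lemma gr_quo_involutionE f u : u \in X -> q f (coset H u) = f u + f (u * h)%g.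
Proof.
move=> uX; have uhX : (u * h)%g \in X by rewrite groupM.
have uh_neq := mulg_involution_neq u.
rewrite ffunE (bigD1 u) /=; last by rewrite uX eqxx.
rewrite (bigD1 (u * h)%g) /=; last by rewrite uhX coset_involutionP // eqxx orbT.
rewrite big1 ?addr0 // => v /andP[/andP[/andP[vX]]].
by rewrite coset_involutionP // => /orP[] /eqP ->; rewrite eqxx // andbF.
Qed.

Lemma repr_coset_involution u : u \in X ->
  repr (coset H u) = u \/ repr (coset H u) = (u * h)%g.
Proof.
move=> uX; apply: mem_rcoset_involution => //.
by rewrite -val_coset ?mem_repr_coset ?(subsetP (cycle_subnorm sHX)).
Qed.

Lemma gr_quo_eq0P f : supp_in X f ->
  q f = 0 <-> exists2 eps, supp_in X eps & f = gr_mul eps (gr_of h - gr_one T).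
Proof.
move=> sf; split=> [qf|[eps seps ->]]; last first.
  rewrite gr_quoM ?gr_quoB ?gr_quo_of ?gr_quo_one ?coset_id ?cycle_id //.
    by rewrite subrr gr_mul0r.
  by apply: supp_inB; [apply: supp_in_of | apply: supp_in_one].
(* Each coset of H in X is {z, z h}; take -f at its representative, 0 at the other. *)
exists [ffun u => if (u \in X) && (u == repr (coset H u)) then - f u else 0].
  by move=> u uX; rewrite ffunE (negbTE uX).
apply/ffunP=> z; rewrite gr_mulBr gr_mul_ofr gr_mul1r !ffunE involution_inv.
have [zX|zX] := boolP (z \in X); last first.
  by rewrite groupMr //= (negbTE zX) sf // subrr.
have zh_neq := mulg_involution_neq z.
have /eqP := gr_quo_involutionE f zX; rewrite qf ffunE eq_sym addr_eq0 => /eqP fzh.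
rewrite groupM //= coset_kerr ?cycle_id //.
case: (repr_coset_involution zX) => ->; rewrite eqxx ?(negbTE zh_neq).
  by rewrite sub0r opprK.
by rewrite eq_sym (negbTE zh_neq) fzh subr0.
Qed.

Lemma gr_quo_bezoutP a b c d :
  supp_in X a -> supp_in X b -> supp_in X c -> supp_in X d ->
  gr_mul (q a) (q b) + gr_mul (q c) (q d) = gr_one _ <->
  exists2 eps, supp_in X eps &
    gr_mul a b + gr_mul c d + gr_mul eps (gr_of h - gr_one T) = gr_one T.
Proof.
move=> sa sb sc sd.
have sabcd : supp_in X (gr_one T - (gr_mul a b + gr_mul c d)).
  by apply/supp_inB/supp_inD; apply: supp_in_one || apply: supp_in_mul.
rewrite -(gr_quo_one x) -!gr_quoM //; split=> [e|[eps seps e]].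
  have /(gr_quo_eq0P sabcd)[eps seps e'] :
      q (gr_one T - (gr_mul a b + gr_mul c d)) = 0.
    by rewrite gr_quoB gr_quoD e subrr.
  by exists eps => //; rewrite -e' addrC subrK.
have /eqP : q (gr_one T - (gr_mul a b + gr_mul c d)) = 0.
  by apply/(gr_quo_eq0P sabcd); exists eps => //; rewrite -{1}e addrAC subrr add0r.
by rewrite gr_quoB gr_quoD subr_eq0 eq_sym => /eqP.
Qed.

End QuotientByInvolution.

Section IndexTwo.
Variables (T : finGroupType) (X : {group T}) (t : T).
Hypotheses (t_notin : t \notin X) (coverX : forall g, g \notin X -> (g * t^-1)%g \in X)
  (conjV : {in X, forall w, (w ^ t = w^-1)%g}).
Local Notation tau := (gr_of t).
Implicit Types (f g : {ffun T -> int}).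
Local Open Scope ring_scope.

Lemma norm_index2 : t \in 'N(X)%g.
Proof.
apply/normP/eqP; rewrite eqEcard cardJg leqnn andbT.
by apply/subsetP=> _ /imsetP[w wX ->]; rewrite conjV ?groupV.
Qed.

Lemma mulgV_index2 z : z \in X -> (z * t^-1)%g \notin X.
Proof. by move=> zX; rewrite groupMl // groupV. Qed.

Lemma sqr_index2 : (t * t)%g \in X.
Proof. by apply/contraT => /coverX; rewrite mulgK (negbTE t_notin). Qed.

Lemma gr_mul_of_index2 f : supp_in X f -> gr_mul tau f = gr_mul (gr_bar f) tau.
Proof.
move=> sf; apply/ffunP=> z; rewrite gr_mul_ofl gr_mul_ofr !ffunE.
have -> : ((z * t^-1)^-1 = ((t^-1 * z)^-1) ^ t^-1)%g.
  by rewrite conjgE !invMg !invgK !mulgA mulgK.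
set w := (t^-1 * z)%g.
have [wX|wX] := boolP (w \in X).
  by rewrite -{1}(conjgK t w) conjV // conjVg invgK.
by rewrite !sf // memJ_norm ?groupV ?norm_index2.
Qed.

Lemma gr_decomp_index2 f :
  exists f1 f2, [/\ supp_in X f1, supp_in X f2 & f = f1 + gr_mul f2 tau].
Proof.
exists [ffun u => if u \in X then f u else 0].
exists [ffun u => if u \in X then f (u * t)%g else 0].
split; try by move=> u uX; rewrite ffunE (negbTE uX).
apply/ffunP=> z; rewrite gr_mul_ofr !ffunE mulgKV.
have [zX|zX] := boolP (z \in X); first by rewrite (negbTE (mulgV_index2 zX)) addr0.
by rewrite coverX // add0r.
Qed.

Lemma gr_decomp_index2_eq0 f1 f2 : supp_in X f1 -> supp_in X f2 ->
  f1 + gr_mul f2 tau = 0 -> f1 = 0 /\ f2 = 0.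
Proof.
move=> s1 s2 e; have /ffunP ez := e; rewrite gr_mul_ofr in ez.
have e1 : f1 = 0.
  apply/ffunP=> z; have := ez z; rewrite !ffunE.
  have [zX|zX] := boolP (z \in X); last by rewrite s1.
  by rewrite s2 ?mulgV_index2 ?addr0.
split=> //; apply/ffunP=> u; have := ez (u * t)%g.
by rewrite e1 !ffunE mulgK add0r => ->.
Qed.

Lemma gr_solution_index2 lam d g eps : supp_in X lam ->
  gr_mul d lam + gr_mul g (gr_bar lam) + gr_mul eps (gr_of (t * t) - gr_one T) = gr_one T ->
  gr_mul (eps - gr_mul g (gr_bar lam) + gr_mul eps tau) (tau - gr_one T)
    + gr_mul (d + gr_mul g tau) lam = gr_one T.
Proof.
move=> slam e; rewrite -[X in _ = X]e.
rewrite !gr_mulDl !gr_mulNl !gr_mulBr !gr_mul1r -!gr_mulA gr_mul_of (gr_mul_of_index2 slam).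
ffun_ring.
Qed.

Lemma gr_solvable_index2P lam : supp_in X lam ->
  (exists alpha beta, gr_mul alpha (tau - gr_one T) + gr_mul beta lam = gr_one T) <->
  (exists d g eps, [/\ supp_in X d, supp_in X g, supp_in X eps &
     gr_mul d lam + gr_mul g (gr_bar lam) + gr_mul eps (gr_of (t * t) - gr_one T)
       = gr_one T]).
Proof.
move=> slam; split=> [[alpha [beta e]]|[d [g [eps [_ _ _ e]]]]]; last first.
  by exists (eps - gr_mul g (gr_bar lam) + gr_mul eps tau), (d + gr_mul g tau);
     apply: gr_solution_index2.
have [a1 [a2 [s1 s2 ea]]] := gr_decomp_index2 alpha.
have [b1 [b2 [t1 t2 eb]]] := gr_decomp_index2 beta.
set A := gr_mul a2 (gr_of (t * t)) - a1 + gr_mul b1 lam.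
set B := a1 - a2 + gr_mul b2 (gr_bar lam).
have sA : supp_in X (A - gr_one T).
  apply/supp_inB/supp_in_one/supp_inD/supp_in_mul => //.
  by apply/supp_inB/s1/supp_in_mul/supp_in_of/sqr_index2.
have sB : supp_in X B by apply/supp_inD/supp_in_mul/supp_in_bar/slam/t2/supp_inB.
have [eA eB] : A - gr_one T = 0 /\ B = 0.
  apply: gr_decomp_index2_eq0 => //; rewrite -{}e ea eb /A /B.
  rewrite !gr_mulDl !gr_mulNl !gr_mulBr !gr_mul1r -!gr_mulA gr_mul_of.
  rewrite (gr_mul_of_index2 slam); ffun_ring.
exists b1, b2, a2; split=> //; apply/eqP; rewrite -subr_eq0.
have -> : gr_mul b1 lam + gr_mul b2 (gr_bar lam)
    + gr_mul a2 (gr_of (t * t) - gr_one T) - gr_one T = (A - gr_one T) + B.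
  by rewrite /A /B gr_mulBr gr_mul1r; ffun_ring.
by rewrite eA eB addr0.
Qed.

End IndexTwo.

Section Quaternion.
Variables (gT : finGroupType) (n : nat) (x y : gT).
Hypotheses (n2 : 2 <= n) (card : #|[set: gT]| = 4 * n)
  (gen : <<[set x; y]>>%g = [set: gT]) (hn : (x ^+ n = y ^+ 2)%g)
  (hr : (x * y * x * y^-1 = 1)%g).
Local Notation t := (x * y)%g.
Local Notation X := <[x]>%g.

Let xyx : (x * y * x = y)%g.
Proof. by apply/eqP; rewrite eq_mulgV1 hr. Qed.

Lemma quat_conjV : {in X, forall w, (w ^ t = w^-1)%g}.
Proof.
have xt : (x ^ t = x^-1)%g.
  have xy : (x * y = y * x^-1)%g by rewrite -{2}xyx mulgK.
  by rewrite conjgM [(x ^ x)%g]conjgE mulKg conjgE xy mulKg.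
by move=> _ /cycleP[k ->]; rewrite conjXg xt expgVn.
Qed.

Lemma quat_sqr : (t * t = x ^+ n)%g.
Proof. by rewrite hn mulgA xyx expgS expg1. Qed.

Lemma quat_cover g : g \notin X -> (g * t^-1)%g \in X.
Proof.
have nXt : t \in 'N(X)%g.
  by apply/normP; rewrite -cycleJ quat_conjV ?cycle_id ?cycleV.
have : g \in (X * <[t]>)%g.
  have xJ : x \in (X <*> <[t]>)%g by rewrite mem_gen // inE cycle_id.
  have tJ : t \in (X <*> <[t]>)%g by rewrite mem_gen // inE cycle_id orbT.
  rewrite -norm_joinEr ?cycle_subG //.
  have : g \in <<[set x; y]>>%g by rewrite gen inE.
  apply/subsetP; rewrite gen_subG subUset !sub1set xJ.
  by rewrite -[X in X \in _](mulKg x y) groupM ?groupV.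
case/mulsgP=> a b aX /cycleP[k ->] ->.
rewrite -(odd_double_half k) addnC expgD -muln2 mulnC expgM expg2 quat_sqr.
have xnkX : (x ^+ n ^+ k./2)%g \in X by rewrite groupX ?mem_cycle.
case: (odd k); rewrite /= ?expg0 ?expg1 ?mulg1 => gX.
  by rewrite mulgA mulgK groupM.
by rewrite groupM in gX.
Qed.

Lemma quat_order : #[x]%g = 2 * n.
Proof.
have : (x ^+ (2 * n) = 1)%g.
  have : ((x ^+ n) ^ t = x ^+ n)%g.
    by rewrite -quat_sqr -expg2 conjXg conjgE mulKg.
  rewrite quat_conjV ?mem_cycle // => /eqP.
  by rewrite eq_invg_mul -expgD addnn -mul2n => /eqP.
move/eqP; rewrite -order_dvdn => /dvdn_leq le_x.
have : #|[set: gT]| <= #|X :|: (X :* t)%g|.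
  apply/subset_leq_card/subsetP=> g _; rewrite inE mem_rcoset.
  by have [//|/quat_cover ->] := boolP (g \in X); rewrite orbT.
move/leq_trans/(_ (leq_card_setU _ _)); rewrite card card_rcoset -/(order x); lia.
Qed.

Lemma quat_notin : t \notin X.
Proof.
apply/negP=> tX; have : [set: gT] \subset X.
  apply/subsetP=> g _; have [//|gX] := boolP (g \in X).
  by move: (quat_cover gX); rewrite groupMr ?groupV // (negbTE gX).
by move/subset_leq_card; rewrite card -/(order x) quat_order; lia.
Qed.

Lemma quat_order_xn : #[x ^+ n]%g = 2.
Proof. by rewrite orderXdiv quat_order ?dvdn_mull // mulnK; lia. Qed.

End Quaternion.

Theorem lemma3p20 (gT : finGroupType) (n : nat) (x y : gT) (ns ms : seq int) :
  (2 <= n)%N ->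
  #|[set: gT]| = (4 * n)%N ->
  <<[set x; y]>>%g = [set: gT] ->
  (x ^+ n = y ^+ 2)%g ->
  (x * y * x * y^-1 = 1)%g ->
  size ms = size ns ->
  all (fun a => a != 0%R) ns -> all (fun a => a != 0%R) ms ->
  let lam := lambdaR x ns ms in
  let H := <[x ^+ n]>%G in
  let xy := gr_of (x * y)%g in
  (* (i), equivalence *)
  ((exists alpha beta : {ffun gT -> int},
      (gr_mul alpha (xy - gr_one gT) + gr_mul beta lam)%R = gr_one gT)
   <->
   (exists delta gamma : {ffun coset_of H -> int},
      supp_in (<[x]> / H)%g delta /\ supp_in (<[x]> / H)%g gamma /\
      (gr_mul delta (gr_quo x H lam) + gr_mul gamma (gr_quo x H (gr_bar lam)))%R
        = gr_one (coset_of H)))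
  /\
  (* (i), explicit solution from lifts *)
  (forall dt gt : {ffun gT -> int},
      supp_in <[x]>%g dt -> supp_in <[x]>%g gt ->
      (gr_mul (gr_quo x H dt) (gr_quo x H lam)
         + gr_mul (gr_quo x H gt) (gr_quo x H (gr_bar lam)))%R = gr_one (coset_of H) ->
      exists eps : {ffun gT -> int},
        supp_in <[x]>%g eps /\
        (gr_mul dt lam + gr_mul gt (gr_bar lam)
           + gr_mul eps (gr_of (x ^+ n)%g - gr_one gT))%R = gr_one gT /\
        (gr_mul (eps - gr_mul gt (gr_bar lam) + gr_mul eps xy) (xy - gr_one gT)
           + gr_mul (dt + gr_mul gt xy) lam)%R = gr_one gT)
  /\
  (* (ii) *)
  (forall delta gamma : {ffun gT -> int},
      supp_in <[x]>%g delta -> supp_in <[x]>%g gamma ->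
      (gr_mul delta lam + gr_mul gamma (gr_bar lam))%R = gr_one gT ->
      (gr_mul (- gr_mul gamma (gr_bar lam)) (xy - gr_one gT)
         + gr_mul (delta + gr_mul gamma xy) lam)%R = gr_one gT).
Proof.
move=> n2 card gen hn hr _ _ _ lam H xy.
have slam : supp_in <[x]>%g lam := supp_in_lambdaR ns ms.
have sbar := supp_in_bar slam.
have conjV := quat_conjV hr.
have solvableP := gr_solvable_index2P (quat_notin n2 card gen hn hr)
  (quat_cover gen hn hr) conjV slam.
have bezoutP := gr_quo_bezoutP (mem_cycle x n) (quat_order_xn n2 card gen hn hr).
have sqr := quat_sqr hn hr.
split; [split|split].
- case/solvableP=> d [g [eps [sd sg seps e]]].
  exists (gr_quo x H d), (gr_quo x H g); do 2?split; try exact: supp_in_gr_quo.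
  by apply/(bezoutP _ _ _ _ sd slam sg sbar); exists eps => //; rewrite -sqr.
- case=> d [g [/(gr_quo_lift (cycleX x n))[dt sdt <-]]].
  case=> /(gr_quo_lift (cycleX x n))[gt sgt <-].
  case/(bezoutP _ _ _ _ sdt slam sgt sbar)=> eps seps e.
  by apply/solvableP; exists dt, gt, eps; rewrite sqr.
- move=> dt gt sdt sgt /(bezoutP _ _ _ _ sdt slam sgt sbar)[eps seps e].
  by exists eps; do !split => //; apply: (gr_solution_index2 conjV slam); rewrite sqr.
- move=> d g sd sg e.
  have := gr_solution_index2 conjV (d := d) (g := g) (eps := 0%R) slam.
  by rewrite !gr_mul0l sub0r !addr0; apply.
Qed.
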